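(* Let $n,m\ge1$, $a^{(1)},b^{(1)}\in\mathbb{R}^n$, $a^{(2)},b^{(2)}\in\mathbb{R}^m$, and for $z\in\mathbb{R}$ put $X(z)=a^{(1)}+b^{(1)}z$, $Y(z)=a^{(2)}+b^{(2)}z$. For $i\in[n],j\in[m]$ and $M\in\mathcal{M}_{i,j}$ let $L_{i,j}(M,z)=\sum_{k\le i,\,l\le j}M_{kl}\,(X_k(z)-Y_l(z))^2$, $\hat L_{i,j}(z)=\min_{M\in\mathcal{M}_{i,j}}L_{i,j}(M,z)$, and $$\hat{\mathcal{M}}_{i,j}=\{M\in\mathcal{M}_{i,j} : \exists z\in\mathbb{R}\ \text{with}\ \hat L_{i,j}(z)=L_{i,j}(M,z)\},$$ with the conventions $\hat{\mathcal{M}}_{0,0}=\{\text{the empty }0\times0\text{ matrix}\}$ and $\hat{\mathcal{M}}_{i,j}=\emptyset$ if exactly one of $i,j$ is $0$. Define $$\tilde{\mathcal{M}}_{i,j}=\Big\{\mathrm{vstack}\big(\hat M,(0,\dots,0,1)\big):\hat M\in\hat{\mathcal{M}}_{i-1,j}\Big\}\cup\Big\{\mathrm{hstack}\big(\hat M,(0,\dots,0,1)^\top\big):\hat M\in\hat{\mathcal{M}}_{i,j-1}\Big\}\cup\Big\{\begin{pmatrix}\hat M&0\\0&1\end{pmatrix}:\hat M\in\hat{\mathcal{M}}_{i-1,j-1}\Big\},$$ all resulting matrices being $i\times j$. Then for every $i\in[n],j\in[m]$, $$\hat{\mathcal{M}}_{i,j}=\Big\{M\in\tilde{\mathcal{M}}_{i,j}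 : \exists z\in\mathbb{R}\ \text{with}\ L_{i,j}(M,z)=\min_{M'\in\tilde{\mathcal{M}}_{i,j}}L_{i,j}(M',z)\Big\},$$ i.e. $\hat{\mathcal{M}}_{i,j}$ is the set of matrices in $\tilde{\mathcal{M}}_{i,j}$ that minimize $L_{i,j}(\cdot,z)$ over $\tilde{\mathcal{M}}_{i,j}$ for some $z\in\mathbb{R}$.
   Context: For $i,j\ge1$, $\mathcal{M}_{i,j}\subset\{0,1\}^{i\times j}$ is the set of binary alignment matrices: matrices whose set of entries equal to $1$ is exactly the set of cells of a warping path $(1,1)=(i_1,j_1),\dots,(i_K,j_K)=(i,j)$ with each step in $\{(1,0),(0,1),(1,1)\}$. $\mathrm{vstack}(A,r)$ appends the row $r$ (of length $j$) below an $(i-1)\times j$ matrix $A$; $\mathrm{hstack}(A,c)$ appends the column $c$ (of length $i$) to the right of an $i\times(j-1)$ matrix $A$; $\begin{pmatrix}\hat M&0\\0&1\end{pmatrix}$ denotes the $i\times j$ matrix obtained from the $(i-1)\times(j-1)$ matrix $\hat M$ by adding a zero last row and zero last column except for entry $(i,j)$ equal to $1$. *)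

From mathcomp Require Import all_boot all_order all_algebra.
Set Implicit Arguments. Unset Strict Implicit. Unset Printing Implicit Defensive.
Import Order.TTheory GRing.Theory Num.Theory.
Local Open Scope ring_scope.

(* Indices are 0-based: row k of an i x j matrix corresponds to the paper's row k+1. *)

Definition wstep (p q : nat * nat) : bool :=
  [|| (q.1 == p.1.+1) && (q.2 == p.2),
      (q.1 == p.1) && (q.2 == p.2.+1)
    | (q.1 == p.1.+1) && (q.2 == p.2.+1)].

Definition warping_path (i j : nat) (s : seq (nat * nat)) : bool :=
  match s with
  | [::] => false
  | x :: s' => [&& x == (0%N, 0%N), path wstep x s' & last x s' == (i.-1, j.-1)]
  end.

(* Binary alignment matrices M_{i,j}: the 1-entries are exactly the cells of
   some warping path. *)
Definition alignment (i j : nat) (M : 'M[bool]_(i, j)) : Prop :=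
  exists s, warping_path i j s /\
    forall (k : 'I_i) (l : 'I_j), M k l = ((k : nat, l : nat) \in s).

(* k-th coordinate (0-based) of a row vector, 0 outside the range. *)
Definition vcoord (R : ringType) (n : nat) (v : 'rV[R]_n) (k : nat) : R :=
  match insub k with Some o => v 0 o | None => 0 end.

Definition affvec (R : ringType) (n : nat) (a b : 'rV[R]_n) (z : R) : nat -> R :=
  fun k => vcoord a k + vcoord b k * z.

Definition Lij (R : ringType) (i j : nat) (x y : nat -> R) (M : 'M[bool]_(i, j)) : R :=
  \sum_(k < i) \sum_(l < j) (M k l)%:R * (x k - y l) ^+ 2.

Definition hatM (R : realFieldType) (X Y : R -> nat -> R) (i j : nat)
    (M : 'M[bool]_(i, j)) : Prop :=
  if (i == 0%N) && (j == 0%N) then True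
  else if (i == 0%N) || (j == 0%N) then False
  else alignment M /\
       exists z : R, forall M' : 'M[bool]_(i, j), alignment M' ->
         Lij (X z) (Y z) M <= Lij (X z) (Y z) M'.

Definition tildeM (R : realFieldType) (X Y : R -> nat -> R) (i j : nat) :
    'M[bool]_(i, j) -> Prop :=
  match i, j return 'M[bool]_(i, j) -> Prop with
  | i'.+1, j'.+1 => fun M =>
      (exists Mh : 'M[bool]_(i', j'.+1), hatM X Y Mh /\
         M = \matrix_(k < i'.+1, l < j'.+1)
               match unlift ord_max k with
               | Some k' => Mh k' l
               | None => l == ord_max
               end)
   \/ (exists Mh : 'M[bool]_(i'.+1, j'), hatM X Y Mh /\
         M = \matrix_(k < i'.+1, l < j'.+1)
               match unlift ord_max l with
               | Some l' => Mh k l'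
               | None => k == ord_max
               end)
   \/ (exists Mh : 'M[bool]_(i', j'), hatM X Y Mh /\
         M = \matrix_(k < i'.+1, l < j'.+1)
               match unlift ord_max k, unlift ord_max l with
               | Some k', Some l' => Mh k' l'
               | None, None => true
               | _, _ => false
               end)
  | _, _ => fun _ => False
  end.

From mathcomp Require Import all_boot all_order all_algebra.
From mathcomp Require Import boolp.
Import Order.TTheory GRing.Theory Num.Theory.
Local Open Scope ring_scope.

(* A warping path reaches the cell (i, j) from (i-1, j), (i, j-1) or
   (i-1, j-1), so every i x j alignment matrix extends a smaller one in one of
   the three ways used to define tildeM, and the extension adds to L(., z) the
   term (X_i(z) - Y_j(z))^2, which does not depend on the matrix.  Hence, for a
   fixed z, an extension is optimal among all alignments exactly when the
   matrix it extends is optimal in its own size, and minimising over all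
   alignments or only over extensions of such optimal matrices gives the same
   minimum. *)

Definition add_row {i j} (Mh : 'M[bool]_(i, j.+1)) : 'M[bool]_(i.+1, j.+1) :=
  \matrix_(k, l) match unlift ord_max k with
                 | Some k' => Mh k' l
                 | None => l == ord_max
                 end.

Definition add_col {i j} (Mh : 'M[bool]_(i.+1, j)) : 'M[bool]_(i.+1, j.+1) :=
  \matrix_(k, l) match unlift ord_max l with
                 | Some l' => Mh k l'
                 | None => k == ord_max
                 end.

Definition add_corner {i j} (Mh : 'M[bool]_(i, j)) : 'M[bool]_(i.+1, j.+1) :=
  \matrix_(k, l) match unlift ord_max k, unlift ord_max l with
                 | Some k', Some l' => Mh k' l'
                 | None, None => true
                 | _, _ => false
                 end.

Definition cells_mx i j (p : seq (nat * nat)) : 'M[bool]_(i, j) :=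
  \matrix_(k, l) ((k : nat, l : nat) \in p).

Definition alignment0 {i j} (M : 'M[bool]_(i, j)) : Prop :=
  if (i == 0%N) && (j == 0%N) then True
  else if (i == 0%N) || (j == 0%N) then False
  else alignment M.

Lemma alignmentE i j (M : 'M[bool]_(i, j)) :
  alignment M <-> exists2 p, warping_path i j p & M = cells_mx i j p.
Proof.
split=> [[p [wp Mp]]|[p wp ->]]; exists p => //.
  by apply/matrixP => k l; rewrite mxE Mp.
by split=> // k l; rewrite mxE.
Qed.

Lemma path_wstep_le_last {x t} : path wstep x t ->
  forall y, y \in x :: t -> (y.1 <= (last x t).1)%N && (y.2 <= (last x t).2)%N.
Proof.
elim: t x => [|z t IH] x /=; first by move=> _ y; rewrite inE => /eqP ->; rewrite !leqnn.
move=> /andP [xz zt] y; rewrite inE => /orP [/eqP ->|]; last exact: IH.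
have /andP [z1 z2] := IH z zt z (mem_head _ _).
by case/or3P: xz => /andP [/eqP e1 /eqP e2];
  rewrite (leq_trans _ z1) ?(leq_trans _ z2) ?e1 ?e2.
Qed.

Lemma warping_path_rcons {i j p k l} : warping_path i j p ->
  wstep (i.-1, j.-1) (k, l) -> warping_path k.+1 l.+1 (rcons p (k, l)).
Proof.
case: p => [|x t] //= /and3P [-> xt /eqP <-] step.
by rewrite rcons_path xt step last_rcons eqxx.
Qed.

Lemma warping_path_notin {i j p k l} : warping_path i j p ->
  (i.-1 < k)%N || (j.-1 < l)%N -> ((k, l) \in p) = false.
Proof.
case: p => [|x t] //= /and3P [_ xt /eqP last_t] out.
apply/negP => /(path_wstep_le_last xt); rewrite last_t /=.
by case/andP => k_le l_le; move: out; rewrite !ltnNge k_le l_le.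
Qed.

Lemma widen_lift_max n (k : 'I_n) : widen_ord (leqnSn n) k = lift ord_max k.
Proof. by apply: val_inj; rewrite /= /bump leqNgt ltn_ord. Qed.

Lemma add_row_cells i j p : (0 < i)%N -> warping_path i j.+1 p ->
  add_row (cells_mx i j.+1 p) = cells_mx i.+1 j.+1 (rcons p (i, j)).
Proof.
move=> i_gt0 wp; apply/matrixP => k l; rewrite !mxE mem_rcons inE xpair_eqE.
case: unliftP => [k'|] ->; first by rewrite mxE lift_max (ltn_eqF (ltn_ord k')).
by rewrite eqxx /= (warping_path_notin wp) ?orbF //= ltn_predL i_gt0.
Qed.

Lemma add_col_cells i j p : (0 < j)%N -> warping_path i.+1 j p ->
  add_col (cells_mx i.+1 j p) = cells_mx i.+1 j.+1 (rcons p (i, j)).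
Proof.
move=> j_gt0 wp; apply/matrixP => k l; rewrite !mxE mem_rcons inE xpair_eqE.
case: unliftP => [l'|] ->; first by rewrite mxE lift_max (ltn_eqF (ltn_ord l')) andbF.
by rewrite eqxx andbT /= (warping_path_notin wp) ?orbF //= ltn_predL j_gt0 orbT.
Qed.

Lemma add_corner_cells i j p : (0 < i)%N -> (0 < j)%N -> warping_path i j p ->
  add_corner (cells_mx i j p) = cells_mx i.+1 j.+1 (rcons p (i, j)).
Proof.
move=> i_gt0 j_gt0 wp; apply/matrixP => k l; rewrite !mxE mem_rcons inE xpair_eqE.
case: unliftP => [k'|] ->; case: unliftP => [l'|] ->.
- by rewrite mxE !lift_max (ltn_eqF (ltn_ord k')).
- rewrite lift_max (ltn_eqF (ltn_ord k')) /= (warping_path_notin wp) //=.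
  by rewrite ltn_predL j_gt0 orbT.
- rewrite lift_max (ltn_eqF (ltn_ord l')) andbF /= (warping_path_notin wp) //=.
  by rewrite ltn_predL i_gt0.
- by rewrite !eqxx.
Qed.

Lemma add_corner_empty (Mh : 'M[bool]_(0, 0)) : add_corner Mh = cells_mx 1 1 [:: (0, 0)]%N.
Proof.
apply/matrixP => k l; rewrite !mxE !ord1.
by case: unliftP => [[]|] //; case: unliftP => [[]|].
Qed.

Section Cost.
Context {R : nzRingType} (x y : nat -> R).

Lemma Lij_add_row {i j} (Mh : 'M[bool]_(i, j.+1)) :
  Lij x y (add_row Mh) = Lij x y Mh + (x i - y j) ^+ 2.
Proof.
rewrite /Lij big_ord_recr /=; congr (_ + _).
  by apply: eq_bigr => k _; apply: eq_bigr => l _; rewrite mxE widen_lift_max liftK.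
rewrite big_ord_recr /= big1 ?add0r; first by rewrite mxE unlift_none eqxx mul1r.
move=> l _; rewrite mxE unlift_none widen_lift_max eq_sym.
by rewrite (negbTE (neq_lift _ _)) mul0r.
Qed.

Lemma Lij_add_col {i j} (Mh : 'M[bool]_(i.+1, j)) :
  Lij x y (add_col Mh) = Lij x y Mh + (x i - y j) ^+ 2.
Proof.
rewrite /Lij; under eq_bigr => k _ do rewrite big_ord_recr /=.
rewrite big_split /=; congr (_ + _).
  by apply: eq_bigr => k _; apply: eq_bigr => l _; rewrite mxE widen_lift_max liftK.
rewrite big_ord_recr /= big1 ?add0r; first by rewrite mxE unlift_none eqxx mul1r.
move=> k _; rewrite mxE unlift_none widen_lift_max eq_sym.
by rewrite (negbTE (neq_lift _ _)) mul0r.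
Qed.

Lemma Lij_add_corner {i j} (Mh : 'M[bool]_(i, j)) :
  Lij x y (add_corner Mh) = Lij x y Mh + (x i - y j) ^+ 2.
Proof.
rewrite /Lij big_ord_recr /=; under eq_bigr => k _ do rewrite big_ord_recr /=.
rewrite big_split /= -addrA; congr (_ + _).
  by apply: eq_bigr => k _; apply: eq_bigr => l _; rewrite mxE !widen_lift_max !liftK.
rewrite big1 ?add0r; last by move=> k _; rewrite mxE widen_lift_max liftK unlift_none mul0r.
rewrite big_ord_recr /= big1 ?add0r; first by rewrite mxE !unlift_none mul1r.
by move=> l _; rewrite mxE unlift_none widen_lift_max liftK mul0r.
Qed.

End Cost.

Lemma alignment_add_row {i j} (Mh : 'M[bool]_(i, j.+1)) :
  alignment0 Mh -> alignment (add_row Mh).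
Proof.
case: i Mh => [|i] Mh; first by [].
rewrite /alignment0 /= => /alignmentE [p wp ->]; apply/alignmentE.
exists (rcons p (i.+1, j)); last exact: add_row_cells.
by apply: (warping_path_rcons wp); rewrite /wstep /= !eqxx.
Qed.

Lemma alignment_add_col {i j} (Mh : 'M[bool]_(i.+1, j)) :
  alignment0 Mh -> alignment (add_col Mh).
Proof.
case: j Mh => [|j] Mh; first by rewrite /alignment0 /=; case.
rewrite /alignment0 /= => /alignmentE [p wp ->]; apply/alignmentE.
exists (rcons p (i, j.+1)); last exact: add_col_cells.
by apply: (warping_path_rcons wp); rewrite /wstep /= !eqxx orbT.
Qed.

Lemma alignment_add_corner {i j} (Mh : 'M[bool]_(i, j)) :
  alignment0 Mh -> alignment (add_corner Mh).
Proof.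
case: i Mh => [|i] Mh; case: j Mh => [|j] Mh; rewrite /alignment0 //=.
  by move=> _; rewrite add_corner_empty; apply/alignmentE; exists [:: (0, 0)]%N.
move=> /alignmentE [p wp ->]; apply/alignmentE.
exists (rcons p (i.+1, j.+1)); last exact: add_corner_cells.
by apply: (warping_path_rcons wp); rewrite /wstep /= !eqxx !orbT.
Qed.

Lemma alignment_cases {i j} (M : 'M[bool]_(i.+1, j.+1)) : alignment M ->
  [\/ exists2 Mh : 'M_(i, j.+1), alignment0 Mh & M = add_row Mh,
      exists2 Mh : 'M_(i.+1, j), alignment0 Mh & M = add_col Mh
    | exists2 Mh : 'M_(i, j), alignment0 Mh & M = add_corner Mh].
Proof.
case/alignmentE => -[//|x s] /= /and3P [/eqP -> xs last_s] ->.
case/lastP: s xs last_s => [_ /eqP [<- <-]|t [k l]].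
  by apply: Or33; exists (const_mx false); rewrite ?add_corner_empty.
rewrite rcons_path last_rcons => /andP [t_path step] /eqP [<- <-].
case last_t: (last (0, 0)%N t) step => [a b] step.
have wp : warping_path a.+1 b.+1 ((0, 0)%N :: t) by rewrite /= t_path last_t !eqxx.
have t_aligned : alignment0 (cells_mx a.+1 b.+1 ((0, 0)%N :: t)).
  by apply/alignmentE; exists ((0, 0)%N :: t).
by case/or3P: step => /andP [/eqP /= -> /eqP /= ->];
  [apply: Or31 | apply: Or32 | apply: Or33]; exists (cells_mx a.+1 b.+1 ((0, 0)%N :: t));
  rewrite ?add_row_cells ?add_col_cells ?add_corner_cells.
Qed.

Lemma exists_minimizer {R : realDomainType} {T : finType} {P : T -> Prop}
    (f : T -> R) {x0} :
  P x0 -> exists2 y, P y & forall x, P x -> f y <= f x.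
Proof.
move=> /asboolP Px0.
case: (@arg_minP _ _ _ _ (fun x => `[< P x >]) f Px0) => y /asboolP Py min_y.
by exists y => // x /asboolP /min_y.
Qed.

Section Minimizers.
Variables (R : realFieldType) (X Y : R -> nat -> R).
Local Notation L z := (Lij (X z) (Y z)).

Lemma hatME i j (M : 'M[bool]_(i, j)) :
  hatM X Y M <-> alignment0 M /\
  exists z, forall M' : 'M_(i, j), alignment0 M' -> L z M <= L z M'.
Proof.
rewrite /hatM /alignment0; case: i M => [|i] M; case: j M => [|j] M //=.
- by split=> // _; split=> //; exists 0 => M' _; rewrite /Lij !big_ord0.
- by split=> // -[].
- by split=> // -[].
Qed.

Lemma tildeM_alignment i j (M : 'M[bool]_(i.+1, j.+1)) : tildeM X Y M -> alignment M.
Proof.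
case=> [[Mh [/hatME [+ _] ->]]|[[Mh [/hatME [+ _] ->]]|[Mh [/hatME [+ _] ->]]]].
- exact: alignment_add_row.
- exact: alignment_add_col.
- exact: alignment_add_corner.
Qed.

Section Extension.
Context {a b i j : nat} {E : 'M[bool]_(a, b) -> 'M[bool]_(i, j)}.
Context {c : (nat -> R) -> (nat -> R) -> R}.
Hypothesis alignment_E : forall N, alignment0 N -> alignment (E N).
Hypothesis Lij_E : forall N x y, Lij x y (E N) = Lij x y N + c x y.

Lemma hatM_of_ext_minimizer z N : alignment0 N ->
  (forall M : 'M_(i, j), alignment M -> L z (E N) <= L z M) -> hatM X Y N.
Proof.
move=> N_aligned min_EN; apply/hatME; split=> //; exists z => N' N'_aligned.
by rewrite -(lerD2r (c (X z) (Y z))) -!Lij_E; apply/min_EN/alignment_E.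
Qed.

Lemma ext_hatM_le z N : alignment0 N ->
  exists2 N', hatM X Y N' & L z (E N') <= L z (E N).
Proof.
move=> N_aligned; have [N' N'_aligned min_N'] := exists_minimizer (L z) N_aligned.
exists N'; first by apply/hatME; split=> //; exists z.
by rewrite !Lij_E lerD2r; apply: min_N'.
Qed.

End Extension.

Lemma hatM_tildeM i j (M : 'M[bool]_(i.+1, j.+1)) :
  hatM X Y M <-> tildeM X Y M /\
  exists z, forall M' : 'M_(i.+1, j.+1), tildeM X Y M' -> L z M <= L z M'.
Proof.
have Lrow := fun (N : 'M_(i, j.+1)) (x y : nat -> R) => Lij_add_row x y N.
have Lcol := fun (N : 'M_(i.+1, j)) (x y : nat -> R) => Lij_add_col x y N.
have Lcorner := fun (N : 'M_(i, j)) (x y : nat -> R) => Lij_add_corner x y N.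
split=> [/hatME [M_aligned [z min_M]] | [M_tilde [z min_M]]].
- split; last by exists z => M' /tildeM_alignment /min_M.
  case: (alignment_cases _ M_aligned) => -[Mh Mh_aligned eM]; rewrite eM in min_M;
    [left | right; left | right; right]; exists Mh; split=> //.
  + exact: hatM_of_ext_minimizer alignment_add_row Lrow z Mh Mh_aligned min_M.
  + exact: hatM_of_ext_minimizer alignment_add_col Lcol z Mh Mh_aligned min_M.
  + exact: hatM_of_ext_minimizer alignment_add_corner Lcorner z Mh Mh_aligned min_M.
- apply/hatME; split; first exact: tildeM_alignment M_tilde.
  exists z => M' /alignment_cases [] [N N_aligned ->].
  + have [N' N'_hat le_N'] := ext_hatM_le Lrow z _ N_aligned.
    by apply: le_trans le_N'; apply: min_M; left; exists N'.
  + have [N' N'_hat le_N'] := ext_hatM_le Lcol z _ N_aligned.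
    by apply: le_trans le_N'; apply: min_M; right; left; exists N'.
  + have [N' N'_hat le_N'] := ext_hatM_le Lcorner z _ N_aligned.
    by apply: le_trans le_N'; apply: min_M; right; right; exists N'.
Qed.

End Minimizers.

Theorem lemma2 (R : realFieldType) (n m : nat) (hn : (0 < n)%N) (hm : (0 < m)%N)
    (a1 b1 : 'rV[R]_n) (a2 b2 : 'rV[R]_m)
    (i j : nat) (hi0 : (0 < i)%N) (hin : (i <= n)%N) (hj0 : (0 < j)%N) (hjm : (j <= m)%N)
    (M : 'M[bool]_(i, j)) :
  hatM (affvec a1 b1) (affvec a2 b2) M <->
  (tildeM (affvec a1 b1) (affvec a2 b2) M /\
   exists z : R, forall M' : 'M[bool]_(i, j),
     tildeM (affvec a1 b1) (affvec a2 b2) M' ->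
     Lij (affvec a1 b1 z) (affvec a2 b2 z) M <= Lij (affvec a1 b1 z) (affvec a2 b2 z) M').
Proof.
case: i hi0 hin M => [|i] // _ _; case: j hj0 hjm => [|j] // _ _ M.
exact: hatM_tildeM.
Qed.
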